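(* Let $B$ be a Boolean algebra with more than two elements, regarded as a commutative semiring with $+=\vee$, $\cdot=\wedge$, zero the least element $0$ and unit the greatest element $1$. Let $G=\langle g\mid g^n=1\rangle$ be a finite cyclic group of order $n\ge 2$, and let $BG$ be the group semiring of $G$ over $B$. Then for every $h\in G$ there exist $\alpha,\beta\in BG\setminus G$ such that $\alpha\beta=h$.
   Context: For a commutative semiring $S$ with unit $1$ and a multiplicative group $G$, the group semiring $SG$ is the set of finite formal sums $\sum_i s_i g_i$ ($s_i\in S$, $g_i\in G$), i.e. finitely supported functions $G\to S$, with coefficientwise addition $\sum_i s_ig_i+\sum_i t_ig_i=\sum_i(s_i+t_i)g_i$ and multiplication $\big(\sum_i s_ig_i\big)\big(\sum_j t_jh_j\big)=\sum_{k\in G}\Big(\sum_{g_ih_j=k}s_it_j\Big)k$. The group $G$ is identified with the subset $\{1\cdot g: g\in G\}\subseteq SG$. *)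

From HB Require Import structures.
From mathcomp Require Import all_boot all_order all_algebra.
Set Implicit Arguments. Unset Strict Implicit. Unset Printing Implicit Defensive.
Import Order.TTheory GRing.Theory.

(* Boolean algebra B: a complemented distributive lattice with top/bottom
   (ctbDistrLatticeType), regarded as a semiring with + = join, * = meet,
   0 = \bot, 1 = \top.
   Finite group G written additively (finZmodType); the cyclic group of
   order n is 'Z_n (for 1 < n).  Since G is finite, the group semiring BG
   is the type of all functions G -> B. *)

Section GroupSemiring.
Context {d : Order.disp_t} (B : ctbDistrLatticeType d) (G : finZmodType).

Local Open Scope order_scope.

Definition gsmul (a b : {ffun G -> B}) : {ffun G -> B} :=
  [ffun k => \join_(x : G) \join_(y : G | (x + y)%R == k) (a x `&` b y)].

Definition gselem (g : G) : {ffun G -> B} :=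
  [ffun k => if k == g then \top else \bot].

Definition in_group (a : {ffun G -> B}) : Prop := exists g : G, a = gselem g.

End GroupSemiring.

From HB Require Import structures.
From mathcomp Require Import all_boot all_order all_algebra.
Import Order.Theory GRing.Theory.

(* Pick a ∉ {0, 1} in B and a generator g of G.  The elements
   α = a·0 + a'·g and β = a·h + a'·(h - g), with a' the complement of a,
   are not in G because their coefficients a are neither 0 nor 1, while
   in αβ the cross terms are a ∧ a' = 0 and the two diagonal terms meet
   at h, giving (a ∨ a')·h = h. *)

Local Open Scope order_scope.

Lemma exists_neq_bot_top d (T : tbPOrderType d) :
  (exists x y z : T, [/\ x != y, x != z & y != z]) ->
  exists a : T, a != \bot /\ a != \top.
Proof.
move=> [x [y [z [xy xz yz]]]].
have [ex|x0] := eqVneq x \bot; last first.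
  have [ex|x1] := eqVneq x \top; last by exists x; split.
  have [ey|y0] := eqVneq y \bot; last by exists y; rewrite -ex; split; rewrite // eq_sym.
  by exists z; rewrite -ex -ey !(eq_sym z); split.
have [ey|y1] := eqVneq y \top; last by exists y; rewrite -ex; split; rewrite // eq_sym.
by exists z; rewrite -ex -ey !(eq_sym z); split.
Qed.

Section GroupSemiring.
Context {d : Order.disp_t} {B : ctbDistrLatticeType d} {G : finZmodType}.
Implicit Types (a : B) (g h k : G) (f u v : {ffun G -> B}).

Lemma gsmulE u v k : gsmul u v k = \join_(x : G) (u x `&` v (k - x)%R).
Proof.
rewrite ffunE; apply: eq_bigr => x _; apply: big_pred1 => y /=.
by rewrite -(inj_eq (addrI (- x)%R)) addKr addrC.
Qed.

Lemma in_group_coef f : in_group f -> forall g, (f g == \bot) || (f g == \top).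
Proof. by move=> [h ->] g; rewrite ffunE; case: ifP; rewrite eqxx ?orbT. Qed.

Definition gspair a g h : {ffun G -> B} :=
  [ffun k => if k == g then a else if k == h then ~` a else \bot].

Lemma gspair_not_in_group a g h :
  a != \bot -> a != \top -> ~ in_group (gspair a g h).
Proof.
move=> a0 a1 /in_group_coef/(_ g); rewrite ffunE eqxx.
by rewrite (negbTE a0) (negbTE a1).
Qed.

Lemma meet_gspairl a g h k :
  a `&` gspair a g h k = if k == g then a else \bot.
Proof.
rewrite ffunE; case: ifP => _; first exact: meetxx.
by case: ifP => _; rewrite ?meetx0 // meetxC.
Qed.

Lemma meet_gspairr a g h k : g != h ->
  ~` a `&` gspair a g h k = if k == h then ~` a else \bot.
Proof.
move=> gh; rewrite ffunE; have [->|_] := eqVneq k g.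
  by rewrite (negbTE gh) meetCx.
by case: ifP => _; rewrite ?meetx0 // meetxx.
Qed.

Lemma gsmul_gspair a g1 g2 h1 h2 :
  g1 != g2 -> (g1 + h1 = g2 + h2)%R ->
  gsmul (gspair a g1 g2) (gspair a h1 h2) = gselem B (g1 + h1)%R.
Proof.
move=> g12 sum12; have h12 : h1 != h2.
  by apply: contra_neq g12 => eh; apply: (addIr h2); rewrite -sum12 eh.
apply/ffunP => k; rewrite gsmulE (bigD1 g1) // (bigD1 g2) /=; last by rewrite eq_sym.
rewrite big1; last first.
  by move=> x /andP [xg1 xg2]; rewrite ffunE (negbTE xg1) (negbTE xg2) meet0x.
have -> : gspair a g1 g2 g1 = a by rewrite ffunE eqxx.
have -> : gspair a g1 g2 g2 = ~` a by rewrite ffunE eq_sym (negbTE g12) eqxx.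
rewrite joinx0 [RHS]ffunE meet_gspairl meet_gspairr // !subr_eq.
rewrite [(h1 + g1)%R]addrC [(h2 + g2)%R]addrC -sum12.
case: ifP => _; last by rewrite joinx0.
exact: joinxC.
Qed.

End GroupSemiring.

Theorem theorem2p5p1 (d : Order.disp_t) (B : ctbDistrLatticeType d) (n : nat) :
  (exists x y z : B, [/\ x != y, x != z & y != z]) ->
  (1 < n)%N ->
  forall h : 'Z_n,
  exists alpha beta : {ffun 'Z_n -> B},
    [/\ ~ in_group alpha, ~ in_group beta & gsmul alpha beta = gselem B h].
Proof.
move=> /exists_neq_bot_top [a [a0 a1]] _ h.
exists (gspair a 0%R 1%R), (gspair a h (h - 1)%R); split.
- exact: gspair_not_in_group.
- exact: gspair_not_in_group.
by rewrite gsmul_gspair ?add0r // addrC subrK.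
Qed.
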